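(* Let $N\ge2$ be an integer, $b>0$, $h=b/N$, and let $A_h=h^2B_h$, where $B_h=(b_{i,j})_{i,j=1}^{N-1}$ is the symmetric Toeplitz matrix with $b_{i,i}=\frac{2N}{3}-1$, $b_{i,j}=\frac N6-1$ if $|i-j|=1$, and $b_{i,j}=-1$ if $|i-j|\ge2$. Let $D_h$ be the diagonal of $A_h$. Then $1\le\lambda_{\max}(D_h^{-1}A_h)<3$.
   Context: $A_h$ is the stiffness matrix of the piecewise linear finite element discretization on the uniform mesh of $(0,b)$ of the nonlocal operator $u\mapsto\int_0^b[u(x)-u(y)]dy$ (constant kernel) with zero exterior condition. *)

From HB Require Import structures.
From mathcomp Require Import all_boot all_order all_algebra.
From mathcomp Require Import reals.
Set Implicit Arguments. Unset Strict Implicit. Unset Printing Implicit Defensive.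
Import Order.TTheory GRing.Theory Num.Theory.
Local Open Scope ring_scope.

(* B_h : the (N-1)x(N-1) symmetric Toeplitz matrix, indices 0..N-2
   (shifted from the paper's 1..N-1). *)
Definition Bmat (R : realType) (N : nat) : 'M[R]_(N.-1) :=
  \matrix_(i < N.-1, j < N.-1)
    if i == j then (2 * N%:R) / 3 - 1
    else if (i.+1 == j :> nat) || (j.+1 == i :> nat) then N%:R / 6 - 1
    else -1.

Definition Amat (R : realType) (N : nat) (b : R) : 'M[R]_(N.-1) :=
  (b / N%:R) ^+ 2 *: Bmat R N.

Definition Dmat (R : realType) (N : nat) (b : R) : 'M[R]_(N.-1) :=
  diag_mx (\row_i Amat N b i i).

Definition is_lambda_max (R : realType) (n : nat) (M : 'M[R]_n) (l : R) : Prop :=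
  eigenvalue M l /\ (forall m : R, eigenvalue M m -> m <= l).

(* Since D_h is the scalar matrix h^2 c with c = 2N/3 - 1, D_h^-1 A_h = c^-1 B_h, and the claim
   is c <= lambda_max(B_h) < 3c = 2N - 3.  Lower bound: B_h is real symmetric, so by the spectral
   theorem its N-1 eigenvalues are real and add up to tr B_h = (N-1) c; the largest is at least
   their mean c.  Upper bound: every eigenvalue is bounded in modulus by some column sum of
   |b_ij| (Gershgorin); as |N/6 - 1| <= 1 + (N/6 - 1/3) and a column has at most two entries
   next to the diagonal, such a sum is at most c + (N-2) + 2 (N/6 - 1/3) = 2N - 11/3. *)

From HB Require Import structures.
From mathcomp Require Import all_boot all_order all_algebra.
From mathcomp Require Import reals complex polyrcf spectral lra.
Import Order.TTheory GRing.Theory Num.Theory.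
Set Implicit Arguments. Unset Strict Implicit. Unset Printing Implicit Defensive.
Local Open Scope ring_scope.

Lemma exists_mean_le (R : realDomainType) n (d : 'I_n.+1 -> R) :
  exists j, \sum_i d i <= n.+1%:R * d j.
Proof.
exists [arg max_(j > ord0) d j]%O; case: arg_maxP => //= j _ jmax.
have -> : n.+1%:R * d j = \sum_(i < n.+1) d j by rewrite sumr_const card_ord mulr_natl.
by apply: ler_sum => i _; exact: jmax.
Qed.

Lemma exists_lambda_max (R : realType) n (M : 'M[R]_n) r :
  eigenvalue M r -> exists2 l, is_lambda_max M l & r <= l.
Proof.
move=> Mr; have p0 : char_poly M != 0 := monic_neq0 (char_poly_monic M).
have eigE x : eigenvalue M x = (x \in rootsR (char_poly M)).
  by rewrite eigenvalue_root_char -(roots_on_rootsR p0 x) in_itv.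
exists (\big[Num.max/r]_(x <- rootsR (char_poly M)) x); last by rewrite bigmax_ge_id.
split=> [|m]; last by rewrite eigE => m_root; exact: le_bigmax_seq.
rewrite eigE big_seq; elim/big_ind: _ => //; first by rewrite -eigE.
by move=> x y xroot yroot; case: leP.
Qed.

Lemma eigenvalueZ (F : fieldType) n (M : 'M[F]_n) (c m : F) : c != 0 ->
  eigenvalue (c *: M) (c * m) = eigenvalue M m.
Proof.
move=> c_neq0; apply/eigenvalueP/eigenvalueP => -[v vM v_neq0]; exists v => //.
  by apply: (can_inj (scalerK c_neq0)); rewrite /= scalemxAr vM scalerA.
by rewrite -scalemxAr vM scalerA.
Qed.

Lemma is_lambda_maxZ (R : realType) n (M : 'M[R]_n) (c l : R) :
  0 < c -> is_lambda_max M l -> is_lambda_max (c *: M) (c * l).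
Proof.
move=> c_gt0 [Ml lmax]; have c_neq0 := lt0r_neq0 c_gt0.
split=> [|m]; first by rewrite eigenvalueZ.
by rewrite -[m](mulVKf c_neq0) eigenvalueZ // => /lmax; rewrite ler_pM2l.
Qed.

Lemma eigenvalue_conj_diag (F : fieldType) n (P : 'M[F]_n) (d : 'rV[F]_n) j :
  P \in unitmx -> eigenvalue (invmx P *m diag_mx d *m P) (d 0 j).
Proof.
move=> Pu; apply/eigenvalueP; exists (delta_mx 0 j *m P).
  rewrite !mulmxA mulmxK // scalemxAl; congr (_ *m _).
  by rewrite -rowE row_diag_mx.
rewrite mulmx_free_eq0 ?row_free_unit //.
by apply/eqP => /matrixP/(_ 0 j)/eqP; rewrite !mxE !eqxx oner_eq0.
Qed.

Lemma realsym_eigenvalues_trace (R : rcfType) n (B : 'M[R]_n) : B^T = B ->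
  exists d : 'rV[R]_n, (forall j, eigenvalue B (d 0 j)) /\ \tr B = \sum_j d 0 j.
Proof.
move=> Bsym; pose BC := map_mx (real_complex R) B.
have BCherm : BC \is hermsymmx.
  apply: realsym_hermsym.
    by apply/is_hermitianmxP; rewrite expr0 scale1r map_mx_id // /BC map_trmx Bsym.
  by apply/mxOverP => i j; rewrite mxE complex_real.
have BCE := orthomx_spectralP (hermitian_normalmx BCherm).
set P := spectralmx BC in BCE; set X := spectral_diag BC in BCE.
have XE j : X 0 j = real_complex R (complex.Re (X 0 j)).
  by rewrite RRe_real //; move/mxOverP: (hermitian_spectral_diag_real BCherm); apply.
exists (map_mx (@complex.Re R) X); split=> [j|].
  have := eigenvalue_conj_diag X j (spectral_unit BC).
  by rewrite -BCE XE eigenvalue_map mxE.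
apply: (@complexI R); rewrite -trace_map_mx -/BC BCE mxtrace_mulC mulmxA.
rewrite mulmxV ?spectral_unit // mul1mx mxtrace_diag rmorph_sum.
by apply: eq_bigr => j _; rewrite mxE; exact: XE.
Qed.

Lemma realsym_exists_eigenvalue_ge_mean (R : rcfType) n (B : 'M[R]_n.+1) :
  B^T = B -> exists2 r, eigenvalue B r & \tr B <= n.+1%:R * r.
Proof.
move=> /realsym_eigenvalues_trace[d [d_eig ->]].
by have [j] := exists_mean_le (fun j => d 0 j); exists (d 0 j).
Qed.

Lemma eigenvalue_norm_lt_colsum (R : realFieldType) n (M : 'M[R]_n) (a r : R) :
  (forall j, \sum_i `|M i j| < r) -> eigenvalue M a -> `|a| < r.
Proof.
move=> colsum /eigenvalueP[v vM v_neq0].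
have /existsP[j0 vj0] : [exists j, v 0 j != 0].
  apply: contraR v_neq0 => /existsPn v0; apply/eqP/rowP => j.
  by rewrite mxE; exact/eqP/negPn/v0.
pose j := [arg max_(j > j0) `|v 0 j|]%O.
have vmax i : `|v 0 i| <= `|v 0 j| by rewrite /j; case: arg_maxP => // k _; apply.
have vj_gt0 : 0 < `|v 0 j| by apply: lt_le_trans (vmax j0); rewrite normr_gt0.
have avj : a * v 0 j = \sum_i v 0 i * M i j by move/rowP: vM => /(_ j); rewrite !mxE.
rewrite -(ltr_pM2r vj_gt0) -normrM avj; apply: le_lt_trans (ler_norm_sum _ _ _) _.
apply: (@le_lt_trans _ _ (`|v 0 j| * \sum_i `|M i j|)).
  by rewrite mulr_sumr; apply: ler_sum => i _; rewrite normrM ler_wpM2r.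
by rewrite mulrC ltr_pM2r.
Qed.

Lemma sum_inj_eq_le1 n (f : 'I_n -> nat) k :
  injective f -> (\sum_(i < n) (f i == k) <= 1)%N.
Proof.
move=> finj; rewrite (eq_bigr (fun i => if f i == k then 1 else 0)%N); last first.
  by move=> i _; case: eqP.
rewrite -big_mkcond sum1_card; apply/card_le1_eqP => i i' /eqP fi /eqP fi'.
by apply: finj; rewrite fi fi'.
Qed.

Definition adjacent (i j : nat) : bool := (i.+1 == j) || (j.+1 == i).

Lemma sum_adjacent_le2 n (j : 'I_n) : (\sum_(i < n) adjacent i j <= 2)%N.
Proof.
apply: (@leq_trans (\sum_(i < n) ((i.+1 == j :> nat) + (val i == j.+1)))).
  apply: leq_sum => i _; rewrite /adjacent [_ == val i]eq_sym.
  by case: (_ == _); case: (_ == _).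
rewrite big_split (leq_add (sum_inj_eq_le1 _ _) (sum_inj_eq_le1 _ _)) //.
  by move=> i i' [] /val_inj.
exact: val_inj.
Qed.

Section Bmat.
Variables (R : realType) (n : nat).
Local Notation N := n.+2.
Local Notation B := (Bmat R N).
Local Notation c := (2 * N%:R / 3 - 1).

Lemma Bmat_diag_gt0 : 0 < c :> R.
Proof.
have N_ge2 : 2 <= N%:R :> R by rewrite (ler_nat R 2).
lra.
Qed.

Lemma Bmat_sym : B^T = B.
Proof. by apply/matrixP => i j; rewrite !mxE eq_sym orbC. Qed.

Lemma Bmat_trace : \tr B = n.+1%:R * c.
Proof.
rewrite /mxtrace (eq_bigr (fun _ => c)); last by move=> i _; rewrite mxE eqxx.
by rewrite sumr_const card_ord [RHS]mulr_natl.
Qed.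

Lemma Bmat_offdiag_norm_le (i j : 'I_n.+1) : i != j ->
  `|B i j| <= 1 + (adjacent i j)%:R * (N%:R / 6 - 1 / 3).
Proof.
move/negbTE => ij; rewrite mxE ij /adjacent.
case: ifP => _; last by rewrite normrN1 mulr0n mul0r addr0.
have N_ge2 : 2 <= N%:R :> R by rewrite (ler_nat R 2).
by rewrite mulr1n mul1r ler_norml; apply/andP; split; lra.
Qed.

Lemma Bmat_colsum_lt (j : 'I_n.+1) : \sum_i `|B i j| < 2 * N%:R - 3.
Proof.
have N_ge2 : 2 <= N%:R :> R by rewrite (ler_nat R 2).
rewrite (bigD1 j) //= mxE eqxx ger0_norm; last lra.
have deg : \sum_(i | i != j) (adjacent i j)%:R <= 2 :> R.
  apply: (@le_trans _ _ (\sum_(i < n.+1) (adjacent i j)%:R)).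
    by rewrite [leRHS](bigD1 j) //= lerDr.
  by rewrite -natr_sum (ler_nat R _ 2) sum_adjacent_le2.
have offdiag : \sum_(i | i != j) `|B i j| <= n%:R + 2 * (N%:R / 6 - 1 / 3).
  apply: le_trans (ler_sum _ (fun i ij => Bmat_offdiag_norm_le ij)) _.
  rewrite big_split /= sumr_const cardC1 card_ord -mulr_suml.
  by rewrite lerD2l ler_wpM2r //; lra.
have NE : N%:R = n%:R + 2 :> R by rewrite -natrD addn2.
lra.
Qed.

Lemma Dmat_invmx_Amat (b : R) : b != 0 -> invmx (Dmat N b) *m Amat N b = c^-1 *: B.
Proof.
move=> b_neq0; set h2 := (b / N%:R) ^+ 2.
have h2_neq0 : h2 != 0 by rewrite expf_neq0 // mulf_neq0 // invr_eq0 pnatr_eq0.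
have -> : Dmat N b = (h2 * c)%:M.
  by apply/matrixP => i j; rewrite !mxE eqxx.
by rewrite invmx_scalar /Amat mul_scalar_mx scalerA invfM mulrAC mulVf // mul1r.
Qed.

End Bmat.

Theorem lemma4p3 (R : realType) (N : nat) (b : R) :
  (2 <= N)%N -> 0 < b ->
  exists l : R,
    is_lambda_max (invmx (Dmat N b) *m Amat N b) l /\ 1 <= l < 3.
Proof.
case: N => [|[|n]] // _ b_gt0.
have c_gt0 := Bmat_diag_gt0 R n; set c := 2 * _ / 3 - 1 in c_gt0 *.
rewrite Dmat_invmx_Amat ?lt0r_neq0 // -/c.
have [r Br trB_le] := realsym_exists_eigenvalue_ge_mean (Bmat_sym R n).
have [l lmax rl] := exists_lambda_max Br.
exists (c^-1 * l); split; first by apply: is_lambda_maxZ; rewrite ?invr_gt0.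
have c_le_l : c <= l by apply: le_trans rl; rewrite Bmat_trace ler_pM2l in trB_le.
have l_lt : `|l| < 2 * n.+2%:R - 3.
  by apply: (eigenvalue_norm_lt_colsum (@Bmat_colsum_lt R n)); case: lmax.
rewrite ler_pdivlMl // ltr_pdivrMl // mulr1.
have := ler_norm l; rewrite /c in c_le_l *; lra.
Qed.
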